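(* Let $n\ge2$ and let $h$ be a smooth symmetric two-covariant tensor field on $\mathbb H^n$. Define the symmetric tensor field \[ \psi=\frac{1}{(x^1)^{n+1}}\bigl(h-h^i{}_i\, b\bigr). \] Then $h=(x^1)^{n+1}\bigl(\psi+\tfrac{1}{1-n}\psi^i{}_i\, b\bigr)$ and \[ P(h)=(x^1)^{n+1}\Bigl(\partial_i\partial_j\psi^{ij}+\partial_1\bigl(\tfrac{1}{x^1}\psi^{ii}\bigr)\Bigr), \] where $\psi^{ij}=b^{ik}b^{j\ell}\psi_{k\ell}$ and $\partial_i=\partial_{x^i}$.
   Context: $\mathbb H^n=\{x\in\mathbb R^n:x^1>0\}$ with hyperbolic metric $b=(x^1)^{-2}\sum_i dx^i\otimes dx^i$. Components are taken in the coordinates $x$; indices are raised and lowered with $b$; all repeated indices are summed over $1,\dots,n$ regardless of position (so $\psi^{ii}=\sum_i\psi^{ii}$ and $h^i{}_i=b^{ij}h_{ij}$). $P(h)=D^iD^jh_{ij}-D^iD_ih^j{}_j-\mathrm{Ric}^{ij}h_{ij}$, where $D$ and $\mathrm{Ric}$ are the Levi-Civita connection and Ricci tensor of $b$. *)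

From HB Require Import structures.
From mathcomp Require Import all_boot all_order all_algebra.
From mathcomp Require Import all_classical all_reals all_analysis.
Set Implicit Arguments. Unset Strict Implicit. Unset Printing Implicit Defensive.
Import Order.TTheory GRing.Theory Num.Theory.
Import numFieldNormedType.Exports.
Local Open Scope ring_scope.
Local Open Scope classical_set_scope.

Section Hyperbolic.
Variables (R : realType) (n : nat).

Notation pt := 'rV[R]_n.

(* Paper's coordinate x^1 is our index 0 (the ordinal with value 0). *)
Definition x1 (x : pt) : R := \sum_(i < n | nat_of_ord i == 0%N) x 0 i.

Definition Hn : set pt := [set x | 0 < x1 x].

Definition pd (i : 'I_n) (f : pt -> R) : pt -> R :=
  fun x => 'D_(delta_mx 0 i) f x.

Definition iter_pd (s : seq 'I_n) (f : pt -> R) : pt -> R :=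
  foldr (fun i g => pd i g) f s.

Definition smooth_on (U : set pt) (f : pt -> R) : Prop :=
  forall (s : seq 'I_n) (x : pt), U x -> differentiable (iter_pd s f) x.

Definition bmet (x : pt) : 'M[R]_n := ((x1 x) ^- 2)%:M.
Definition binv (x : pt) : 'M[R]_n := invmx (bmet x).

Definition trb (T : pt -> 'M[R]_n) (x : pt) : R :=
  \sum_(i < n) \sum_(j < n) binv x i j * T x i j.

Definition raise2 (T : pt -> 'M[R]_n) (x : pt) : 'M[R]_n :=
  \matrix_(i < n, j < n) \sum_(k < n) \sum_(l < n) binv x i k * binv x j l * T x k l.

Definition Gam (k i j : 'I_n) (x : pt) : R :=
  2^-1 * \sum_(l < n) binv x k l *
    (pd i (fun y => bmet y j l) x + pd j (fun y => bmet y i l) x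
     - pd l (fun y => bmet y i j) x).

Definition Ric (i j : 'I_n) (x : pt) : R :=
  \sum_(k < n) (pd k (Gam k i j) x - pd j (Gam k i k) x
     + \sum_(l < n) (Gam k k l x * Gam l i j x - Gam k j l x * Gam l i k x)).

Definition DT (T : pt -> 'M[R]_n) (k i j : 'I_n) (x : pt) : R :=
  pd k (fun y => T y i j) x
  - \sum_(m < n) (Gam m k i x * T x m j + Gam m k j x * T x i m).

Definition D2T (T : pt -> 'M[R]_n) (a c i j : 'I_n) (x : pt) : R :=
  pd a (DT T c i j) x
  - \sum_(m < n) (Gam m a c x * DT T m i j x + Gam m a i x * DT T c m j x
                  + Gam m a j x * DT T c i m x).

Definition Hess (f : pt -> R) (a c : 'I_n) (x : pt) : R :=
  pd a (pd c f) x - \sum_(m < n) Gam m a c x * pd m f x.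

(* P(h) = D^i D^j h_{ij} - D^i D_i h^j_j - Ric^{ij} h_{ij} *)
Definition Pop (h : pt -> 'M[R]_n) (x : pt) : R :=
  \sum_(i < n) \sum_(j < n) \sum_(a < n) \sum_(c < n)
     binv x i a * binv x j c * D2T h a c i j x
  - \sum_(a < n) \sum_(c < n) binv x a c * Hess (trb h) a c x
  - \sum_(i < n) \sum_(j < n) \sum_(a < n) \sum_(c < n)
     binv x i a * binv x j c * Ric a c x * h x i j.

Definition psi (h : pt -> 'M[R]_n) (x : pt) : 'M[R]_n :=
  (x1 x ^+ n.+1)^-1 *: (h x - trb h x *: bmet x).

End Hyperbolic.

(* The metric b = (x^1)^-2 (sum_i dx^i dx^i) is conformally flat, so everything in P is
   explicit in the coordinates: b^{ij} = (x^1)^2 delta^{ij}, the Christoffel symbols are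
   Gamma^k_{ij} = (delta^k_1 delta_{ij} - delta_{i1} delta^k_j - delta_{j1} delta^k_i) / x^1,
   and Ric = (1 - n) b.  Expanding the covariant derivatives writes P(h) as a combination of
   the flat second derivatives of h, of tr h = sum_k h_kk, and of the components h_{1k}, h_{k1}.
   On the other side psi^{ij} = (x^1)^{3-n} (h_ij - delta_ij tr h), and differentiating it
   twice gives the same combination.  The first identity just inverts h |-> psi, using
   tr_b psi = (1 - n) (x^1)^{-(n+1)} tr_b h, which is where n <> 1 is needed. *)

From HB Require Import structures.
From mathcomp Require Import all_boot all_order all_algebra.
From mathcomp Require Import all_classical all_reals all_analysis.
From mathcomp Require Import ring.
Set Implicit Arguments. Unset Strict Implicit. Unset Printing Implicit Defensive.
Import Order.TTheory GRing.Theory Num.Theory.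
Import numFieldNormedType.Exports.
Local Open Scope ring_scope.

Section Kronecker.
Variables (R : pzSemiRingType) (n : nat).

Definition kdelta (i j : 'I_n) : R := (i == j)%:R.

Lemma kdeltaC i j : kdelta i j = kdelta j i.
Proof. by rewrite /kdelta eq_sym. Qed.

Lemma kdelta_refl i : kdelta i i = 1.
Proof. by rewrite /kdelta eqxx. Qed.

Lemma sum_kdelta_l j (F : 'I_n -> R) : \sum_(m < n) kdelta j m * F m = F j.
Proof.
rewrite (bigD1 j) //= kdelta_refl mul1r big1 ?addr0 // => m mj.
by rewrite /kdelta eq_sym (negPf mj) mul0r.
Qed.

Lemma sum_kdelta_r j (F : 'I_n -> R) : \sum_(m < n) kdelta m j * F m = F j.
Proof. by rewrite -[RHS](sum_kdelta_l j); apply: eq_bigr => m _; rewrite kdeltaC. Qed.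

Lemma sum_kdelta_refl (F : 'I_n -> R) : \sum_(i < n) kdelta i i * F i = \sum_(i < n) F i.
Proof. by apply: eq_bigr => i _; rewrite kdelta_refl mul1r. Qed.

End Kronecker.

Arguments kdelta {R n} i j.
Arguments kdeltaC {R n} i j.
Arguments kdelta_refl {R n} i.

Ltac kdelta_cases :=
  rewrite /kdelta;
  repeat (rewrite ?eqxx; match goal with
    |- context [(?a == ?b)] => case: (a =P b) => [?|?]; try subst end);
  try (by exfalso; match goal with H : ?x <> ?x |- _ => exact: H erefl end);
  rewrite ?mulr1n ?mulr0n.

Section IndexSums.
Variables (R : comPzSemiRingType) (n : nat).
Implicit Types (F G H P : 'I_n -> 'I_n -> R).

Lemma sum2_kdelta_split j0 F G H P :
  \sum_(i < n) \sum_(j < n)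
     (kdelta i j0 * F i j + kdelta j j0 * G i j + kdelta i j * H i j + P i j) =
  \sum_(j < n) F j0 j + \sum_(i < n) G i j0 + \sum_(i < n) H i i
  + \sum_(i < n) \sum_(j < n) P i j.
Proof.
have -> : \sum_(j < n) F j0 j = \sum_(i < n) \sum_(j < n) kdelta i j0 * F i j.
  by under [RHS]eq_bigr do rewrite -mulr_sumr; rewrite sum_kdelta_r.
have -> : \sum_(i < n) G i j0 = \sum_(i < n) \sum_(j < n) kdelta j j0 * G i j.
  by apply: eq_bigr => i _; rewrite sum_kdelta_r.
have -> : \sum_(i < n) H i i = \sum_(i < n) \sum_(j < n) kdelta i j * H i j.
  by apply: eq_bigr => i _; rewrite sum_kdelta_l.
by rewrite -!big_split; apply: eq_bigr => i _; rewrite -!big_split.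
Qed.

Lemma sum2_split F (Y Z : 'I_n -> R) :
  \sum_(i < n) \sum_(j < n) (F i j + Y i + Z j) =
  \sum_(i < n) \sum_(j < n) F i j + (\sum_(i < n) Y i) *+ n + (\sum_(j < n) Z j) *+ n.
Proof.
under eq_bigr do rewrite !big_split /= sumr_const card_ord.
by rewrite !big_split /= sumr_const card_ord sumrMnl.
Qed.

Lemma sum2_mull (c : R) F :
  \sum_(i < n) \sum_(j < n) c * F i j = c * \sum_(i < n) \sum_(j < n) F i j.
Proof. by rewrite mulr_sumr; under [RHS]eq_bigr do rewrite mulr_sumr. Qed.

Lemma sum_mulAl (c : R) (F G : 'I_n -> R) :
  \sum_(i < n) c * G i * F i = c * \sum_(i < n) G i * F i.
Proof. by rewrite mulr_sumr; apply: eq_bigr => i _; rewrite mulrA. Qed.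

Lemma sum_mulAr (c : R) (F G : 'I_n -> R) :
  \sum_(i < n) G i * c * F i = c * \sum_(i < n) G i * F i.
Proof. by rewrite -sum_mulAl; apply: eq_bigr => i _; rewrite [G i * c]mulrC. Qed.

End IndexSums.

Section HalfSpace.
Variables (R : realType) (n : nat).
Hypothesis n_gt0 : (0 < n)%N.
Local Notation pt := 'rV[R]_n.
Local Notation e a := (delta_mx 0 a : pt).

Definition i0 : 'I_n := Ordinal n_gt0.

Lemma sum_at_i0 (F : 'I_n -> R) : \sum_(i < n | nat_of_ord i == 0%N) F i = F i0.
Proof. by apply: big_pred1 => i /=; rewrite -val_eqE. Qed.

Lemma x1E (y : pt) : x1 y = y 0 i0.
Proof. exact: (sum_at_i0 (fun i => y 0 i)). Qed.

Lemma derive_coord (v x : pt) k : 'D_v (fun y : pt => y 0 k) x = v 0 k.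
Proof.
rewrite /derive; apply: cvg_lim => //.
apply: cvg_trans (cvg_cst (v 0 k)).
apply: near_eq_cvg; apply: filterS (@nbhs_dnbhs_neq _ (0 : R)) => t /= t0.
  by rewrite !mxE addrK /GRing.scale /= mulrA mulVf ?mul1r.
exact: dnbhs_filter.
Qed.

Section DerivativeRules.
Variables (x : pt) (a : 'I_n).
Implicit Types f g : pt -> R.

Lemma derivableD_fun f g : derivable f x (e a) -> derivable g x (e a) ->
  derivable (fun y => f y + g y) x (e a).
Proof. exact: derivableD. Qed.

Lemma derivableN_fun f : derivable f x (e a) -> derivable (fun y => - f y) x (e a).
Proof. exact: derivableN. Qed.

Lemma derivableM_fun f g : derivable f x (e a) -> derivable g x (e a) ->
  derivable (fun y => f y * g y) x (e a).
Proof. exact: derivableM. Qed.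

Lemma derivable_sum_fun m (F : 'I_m -> pt -> R) : (forall i, derivable (F i) x (e a)) ->
  derivable (fun y => \sum_(i < m) F i y) x (e a).
Proof. by move=> dF; have := derivable_sum dF; rewrite fct_sumE. Qed.

Lemma pdD f g : derivable f x (e a) -> derivable g x (e a) ->
  pd a (fun y => f y + g y) x = pd a f x + pd a g x.
Proof. by move=> df dg; rewrite /pd (deriveD df dg). Qed.

Lemma pdN f : derivable f x (e a) -> pd a (fun y => - f y) x = - pd a f x.
Proof. by move=> df; rewrite /pd (deriveN df). Qed.

Lemma pdM f g : derivable f x (e a) -> derivable g x (e a) ->
  pd a (fun y => f y * g y) x = f x * pd a g x + g x * pd a f x.
Proof. by move=> df dg; rewrite /pd (deriveM df dg). Qed.

Lemma pdMr f (c : R) : derivable f x (e a) -> pd a (fun y => f y * c) x = pd a f x * c.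
Proof. by move=> df; rewrite /pd (deriveMr c df) mulrC. Qed.

Lemma pd_cst (c : R) : pd a (fun _ => c) x = 0.
Proof. exact: derive_cst. Qed.

Lemma pd_sum m (F : 'I_m -> pt -> R) : (forall i, derivable (F i) x (e a)) ->
  pd a (fun y => \sum_(i < m) F i y) x = \sum_(i < m) pd a (F i) x.
Proof. by move=> dF; rewrite /pd -(derive_sum dF) fct_sumE. Qed.

Lemma derivable_x1 : derivable (@x1 R n) x (e a).
Proof.
have -> : @x1 R n = (fun y : pt => y 0 i0) by apply/funext => y; rewrite x1E.
exact/diff_derivable/differentiable_coord.
Qed.

Lemma pd_x1 : pd a (@x1 R n) x = kdelta a i0.
Proof.
have -> : @x1 R n = (fun y : pt => y 0 i0) by apply/funext => y; rewrite x1E.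
by rewrite /pd derive_coord mxE /kdelta eqxx /= eq_sym.
Qed.

Lemma derivable_x1X k : derivable (fun y : pt => x1 y ^+ k) x (e a).
Proof. by rewrite -exprfctE; apply/derivableX/derivable_x1. Qed.

Lemma pd_x1X k : pd a (fun y : pt => x1 y ^+ k) x = k%:R * x1 x ^+ k.-1 * kdelta a i0.
Proof.
rewrite -exprfctE /pd deriveX; last exact: derivable_x1.
rewrite -/(pd a _ x) pd_x1 /GRing.scale /=.
by [].
Qed.

Hypothesis x0 : x1 x != 0.

Lemma derivable_x1VX k : derivable (fun y : pt => (x1 y ^+ k)^-1) x (e a).
Proof. by apply: derivableV; [rewrite expf_neq0 | exact: derivable_x1X]. Qed.

Lemma pd_x1VX k :
  pd a (fun y : pt => (x1 y ^+ k)^-1) x = - k%:R * (x1 x ^+ k.+1)^-1 * kdelta a i0.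
Proof.
rewrite /pd deriveV; [|by rewrite expf_neq0|exact: derivable_x1X].
rewrite -/(pd a _ x) pd_x1X /GRing.scale /=.
case: k => [|k]; first by ring.
have xk : x1 x ^+ k != 0 by rewrite expf_neq0.
by rewrite /= !exprS; field; rewrite xk x0.
Qed.

Lemma derivable_x1V : derivable (fun y : pt => (x1 y)^-1) x (e a).
Proof. by apply: derivableV => //; exact: derivable_x1. Qed.

Lemma pd_x1V : pd a (fun y : pt => (x1 y)^-1) x = - (x1 x ^+ 2)^-1 * kdelta a i0.
Proof.
have -> : (fun y : pt => (x1 y)^-1) = (fun y => (x1 y ^+ 1)^-1).
  by apply/funext => y; rewrite expr1.
by rewrite pd_x1VX mulN1r.
Qed.

End DerivativeRules.

Lemma Hn_near (x : pt) : Hn x -> \forall y \near x, Hn y.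
Proof.
rewrite /Hn /= x1E => hx.
have x1_near := @coord_continuous R 1 n 0 i0 x _ (lt_nbhsr hx).
near=> y; rewrite /Hn /= x1E; near: y; exact: x1_near.
Unshelve. all: by end_near.
Qed.

Lemma pd_eq_Hn (f g : pt -> R) (x : pt) a :
  (forall y, Hn y -> f y = g y) -> Hn x -> pd a f x = pd a g x.
Proof.
move=> fg hx; rewrite /pd; apply: near_eq_derive.
by apply: filterS (Hn_near hx) => y; apply: fg.
Qed.

Lemma binvE (y : pt) i j : binv y i j = x1 y ^+ 2 * kdelta i j.
Proof. by rewrite /binv /bmet invmx_scalar invrK mxE /kdelta mulr_natr. Qed.

Lemma bmetE (y : pt) i j : bmet y i j = (x1 y ^+ 2)^-1 * kdelta i j.
Proof. by rewrite /bmet mxE /kdelta mulr_natr. Qed.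

Lemma sum_binv (y : pt) (G : 'I_n -> 'I_n -> R) :
  \sum_(a < n) \sum_(c < n) binv y a c * G a c = x1 y ^+ 2 * \sum_(a < n) G a a.
Proof.
rewrite mulr_sumr; apply: eq_bigr => a _.
under eq_bigr do rewrite binvE (mulrC (x1 y ^+ 2)) -mulrA.
exact: sum_kdelta_l.
Qed.

Lemma trbE (T : pt -> 'M[R]_n) (y : pt) : trb T y = x1 y ^+ 2 * \sum_(k < n) T y k k.
Proof. exact: sum_binv. Qed.

Lemma sum_binv_binv (y : pt) i j (F : 'I_n -> 'I_n -> R) :
  \sum_(a < n) \sum_(c < n) binv y i a * binv y j c * F a c = x1 y ^+ 4 * F i j.
Proof.
rewrite -(sum_kdelta_l j (fun c => x1 y ^+ 4 * F i c)).
rewrite -(sum_kdelta_l i (fun a => \sum_(c < n) kdelta j c * (x1 y ^+ 4 * F a c))).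
apply: eq_bigr => a _; rewrite mulr_sumr; apply: eq_bigr => c _.
by rewrite !binvE; ring.
Qed.

Lemma raise2E (T : pt -> 'M[R]_n) (y : pt) i j : raise2 T y i j = x1 y ^+ 4 * T y i j.
Proof. by rewrite /raise2 mxE sum_binv_binv. Qed.

Definition Gam_coef (k i j : 'I_n) : R :=
  kdelta k i0 * kdelta i j - kdelta i i0 * kdelta j k - kdelta j i0 * kdelta i k.

Lemma GamE k i j : Gam k i j = fun y : pt => (x1 y)^-1 * Gam_coef k i j.
Proof.
apply/funext => y; rewrite /Gam.
have [y0|y0] := eqVneq (x1 y) 0.
  rewrite y0 invr0 mul0r big1 ?mulr0 // => l _.
  by rewrite binvE y0 expr0n /= !mul0r.
have pd_bmet b c a : pd a (fun y => bmet y b c) y =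
    - 2%:R * (x1 y ^+ 3)^-1 * kdelta a i0 * kdelta b c.
  rewrite (_ : (fun y => bmet y b c) = fun y => (x1 y ^+ 2)^-1 * kdelta b c).
    by rewrite pdMr ?pd_x1VX //; exact: derivable_x1VX.
  by apply/funext => z; rewrite bmetE.
under eq_bigr do rewrite binvE [_ * kdelta k _]mulrC -[kdelta k _ * _ * _]mulrA.
rewrite sum_kdelta_l !pd_bmet /Gam_coef (kdeltaC j k) (kdeltaC i k).
by field.
Qed.

Lemma sum_GamMl i j (y : pt) (X : 'I_n -> R) :
  \sum_(m < n) Gam m i j y * X m =
  (x1 y)^-1 * (kdelta i j * X i0 - kdelta i i0 * X j - kdelta j i0 * X i).
Proof.
rewrite (eq_bigr (fun m => (x1 y)^-1 * kdelta i j * (kdelta m i0 * X m)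
    - (x1 y)^-1 * kdelta i i0 * (kdelta j m * X m)
    - (x1 y)^-1 * kdelta j i0 * (kdelta i m * X m))); last first.
  by move=> m _; rewrite GamE /Gam_coef; ring.
by rewrite !sumrB -!mulr_sumr sum_kdelta_r !sum_kdelta_l; ring.
Qed.

Lemma sum_GamMr i j (y : pt) (X : 'I_n -> R) :
  \sum_(m < n) X m * Gam m i j y =
  (x1 y)^-1 * (kdelta i j * X i0 - kdelta i i0 * X j - kdelta j i0 * X i).
Proof. by rewrite -sum_GamMl; apply: eq_bigr => m _; rewrite mulrC. Qed.

Lemma RicE (x : pt) a c :
  x1 x != 0 -> Ric a c x = (1 - n%:R) * (x1 x ^+ 2)^-1 * kdelta a c.
Proof.
move=> x0; rewrite /Ric.
set w := (x1 x ^+ 2)^-1.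
have wE : w = (x1 x)^-1 * (x1 x)^-1 by rewrite /w expr2 invfM.
have pd_Gam k i j b : pd b (Gam k i j) x = - w * kdelta b i0 * Gam_coef k i j.
  by rewrite GamE pdMr ?pd_x1V //; exact: derivable_x1V.
rewrite (eq_bigr (fun k => w * (kdelta k i0 * (Gam_coef k c a - Gam_coef k a c)
    - kdelta a k * Gam_coef k c i0
    + (- (kdelta a i0 * kdelta c i0) - kdelta c i0 * kdelta a i0 - Gam_coef i0 a c))));
  last first.
  move=> k _; rewrite !pd_Gam sumrB !sum_GamMr !GamE wE /Gam_coef.
  by kdelta_cases; ring.
rewrite -mulr_sumr big_split /= sumrB sum_kdelta_r sum_kdelta_l sumr_const card_ord.
by rewrite /Gam_coef -mulr_natr; kdelta_cases; ring.
Qed.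

Lemma sum4_binv (y : pt) (F : 'I_n -> 'I_n -> 'I_n -> 'I_n -> R) :
  \sum_(i < n) \sum_(j < n) \sum_(a < n) \sum_(c < n) binv y i a * binv y j c * F i j a c
  = x1 y ^+ 4 * \sum_(i < n) \sum_(j < n) F i j i j.
Proof.
by rewrite -sum2_mull; apply: eq_bigr => i _; apply: eq_bigr => j _; exact: sum_binv_binv.
Qed.

Lemma sum4_binvM (y : pt) (A B : 'I_n -> 'I_n -> R) :
  \sum_(i < n) \sum_(j < n) \sum_(a < n) \sum_(c < n) binv y i a * binv y j c * A a c * B i j
  = x1 y ^+ 4 * \sum_(i < n) \sum_(j < n) A i j * B i j.
Proof.
rewrite -(sum4_binv y (fun i j a c => A a c * B i j)).
by do 4 (apply: eq_bigr => ? _); rewrite mulrA.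
Qed.

End HalfSpace.

Section Perturbation.
Variables (R : realType) (n : nat).
Hypothesis n_gt0 : (0 < n)%N.
Local Notation pt := 'rV[R]_n.
Local Notation i0 := (@i0 n n_gt0).
Local Notation e a := (delta_mx 0 a : pt).
Variable h : pt -> 'M[R]_n.
Hypothesis h_smooth : forall i j : 'I_n, smooth_on (@Hn R n) (fun x => h x i j).

Lemma derivable_h (y : pt) p q a : Hn y -> derivable (fun y => h y p q) y (e a).
Proof. by move=> hy; apply/diff_derivable/(h_smooth p q [::] hy). Qed.

Lemma derivable_pd_h (y : pt) c p q a : Hn y ->
  derivable (pd c (fun y => h y p q)) y (e a).
Proof. by move=> hy; apply/diff_derivable/(h_smooth p q [:: c] hy). Qed.

Ltac derivable_tac := repeat match goal with
  | |- derivable (fun _ => ?c) _ _ => exact: derivable_cst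
  | |- derivable (fun y => @fun_of_matrix _ _ _ (h y) _ _) _ _ => by apply: derivable_h
  | |- derivable (fun y => pd _ (fun y => @fun_of_matrix _ _ _ (h y) _ _) y) _ _ =>
       by apply: derivable_pd_h
  | |- derivable (pd _ (fun y => @fun_of_matrix _ _ _ (h y) _ _)) _ _ =>
       by apply: derivable_pd_h
  | |- derivable (fun y => (x1 y)^-1) _ _ => by apply: derivable_x1V
  | |- derivable (fun y => x1 y ^+ _) _ _ => exact: derivable_x1X
  | |- derivable (fun y => (x1 y ^+ _)^-1) _ _ => by apply: derivable_x1VX
  | |- derivable (fun y => @?A y + @?B y) _ _ => apply: derivableD_fun
  | |- derivable (fun y => - @?A y) _ _ => apply: derivableN_fun
  | |- derivable (fun y => @?A y * @?B y) _ _ => apply: derivableM_fun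
  | |- derivable (fun y => \sum_(i < _) @?A y i) _ _ => apply: derivable_sum_fun => ?
  end.

Ltac pd_expand := repeat (match goal with
  | |- context [pd ?a (fun _ => ?c) ?x] => rewrite (@pd_cst _ _ x a c)
  | |- context [pd ?a (fun y => (x1 y)^-1) ?x] =>
       rewrite (@pd_x1V _ _ n_gt0 x a); last by []
  | |- context [pd ?a (fun y => x1 y ^+ ?k) ?x] => rewrite (@pd_x1X _ _ n_gt0 x a k)
  | |- context [pd ?a (fun y => (x1 y ^+ ?k)^-1) ?x] =>
       rewrite (@pd_x1VX _ _ n_gt0 x a _ k); last by []
  | |- context [pd ?a (fun y => \sum_(k < ?m) @?A y k) ?x] =>
       rewrite (@pd_sum _ _ x a m (fun k y => A y k)); [| move=> ?; derivable_tac]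
  | |- context [pd ?a (fun y => @?A y + @?B y) ?x] =>
       rewrite (@pdD _ _ x a A B); [| derivable_tac | derivable_tac]
  | |- context [pd ?a (fun y => - @?A y) ?x] =>
       rewrite (@pdN _ _ x a A); [| derivable_tac]
  | |- context [pd ?a (fun y => @?A y * @?B y) ?x] =>
       rewrite (@pdM _ _ x a A B); [| derivable_tac | derivable_tac]
  end; cbv beta).

Ltac sum_normalize :=
  rewrite ?(mulrDr, mulrDl, mulrN, mulNr, opprD, opprK);
  rewrite ?(big_split, sumrN) /=;
  rewrite ?sum_mulAl ?sum_mulAr ?sum_kdelta_refl -?mulr_sumr ?sum_kdelta_l ?sum_kdelta_r
          ?kdelta_refl ?sumr_const ?card_ord /=.

Definition conn_corr (c p q : 'I_n) (y : pt) : R :=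
  2%:R * kdelta c i0 * h y p q + kdelta p i0 * h y c q - kdelta c p * h y i0 q
  + kdelta q i0 * h y p c - kdelta c q * h y p i0.

Lemma DTE c p q :
  DT h c p q = fun y => pd c (fun y => h y p q) y + (x1 y)^-1 * conn_corr c p q y.
Proof.
apply/funext => y; rewrite /DT big_split /= (sum_GamMl n_gt0 c p y (fun m => h y m q)).
by rewrite (sum_GamMl n_gt0 c q y (fun m => h y p m)) /conn_corr; ring.
Qed.

Lemma sum_D2T_diag (x : pt) : Hn x ->
  \sum_(i < n) \sum_(j < n) D2T h i j i j x =
  \sum_(i < n) \sum_(j < n) pd i (pd j (fun y => h y i j)) x
  + (3%:R - n%:R) * (x1 x ^+ 2)^-1 * (\sum_(k < n) h x k k + (2%:R - n%:R) * h x i0 i0)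
  + (x1 x)^-1 * ((3%:R - n%:R) * (\sum_(k < n) pd k (fun y => h y k i0) x
        + \sum_(k < n) pd k (fun y => h y i0 k) x) + \sum_(k < n) pd i0 (fun y => h y k k) x).
Proof.
move=> hx; have x0 : x1 x != 0 by rewrite gt_eqF.
set z := (x1 x)^-1; set w := (x1 x ^+ 2)^-1.
have wE : w = z * z by rewrite /w /z expr2 invfM.
pose g a p q := pd a (fun y => h y p q) x.
pose Dx c p q := g c p q + z * conn_corr c p q x.
(* Sort each summand by the Kronecker factor that collapses the double sum. *)
transitivity (\sum_(i < n) \sum_(j < n)
   (kdelta i i0 * (- w * conn_corr j i j x + 4%:R * z * Dx j i j + z * g i j j)
   + kdelta j i0 * (z * Dx i i j + z * Dx j i i + 3%:R * z * g i i j)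
   + kdelta i j * (- z * Dx i0 i j - z * Dx j i i0 - z * g i i0 j)
   + (pd i (pd j (fun y => h y i j)) x - z * g i i i0 - z * Dx j i0 j))).
  apply: eq_bigr => i _; apply: eq_bigr => j _.
  rewrite /D2T DTE /= !big_split /= !(sum_GamMl n_gt0 i _ x (fun m => _)) !DTE.
  rewrite /Dx /g /conn_corr -/z; pd_expand.
  by rewrite -/z -/w wE; kdelta_cases; ring.
rewrite sum2_kdelta_split sum2_split /Dx /g /conn_corr.
do 3 sum_normalize.
by rewrite wE; ring.
Qed.

Lemma pd_trb m (y : pt) : Hn y -> pd m (trb h) y =
  x1 y ^+ 2 * \sum_(k < n) pd m (fun y => h y k k) y
  + (\sum_(k < n) h y k k) * (2%:R * x1 y ^+ 1 * kdelta m i0).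
Proof. by move=> hy; rewrite (funext (trbE h)); pd_expand; ring. Qed.

Lemma sum_Hess_trb (x : pt) : Hn x ->
  \sum_(a < n) Hess (trb h) a a x =
  2%:R * (3%:R - n%:R) * \sum_(k < n) h x k k
  + (6%:R - n%:R) * x1 x * \sum_(k < n) pd i0 (fun y => h y k k) x
  + x1 x ^+ 2 * \sum_(a < n) \sum_(k < n) pd a (fun y => pd a (fun y => h y k k) y) x.
Proof.
move=> hx; have x0 : x1 x != 0 by rewrite gt_eqF.
set z := (x1 x)^-1.
pose X m := pd m (trb h) x.
transitivity (\sum_(a < n)
   (kdelta a i0 * (2%:R * 2%:R * x1 x * \sum_(k < n) pd a (fun y => h y k k) x
                   + 2%:R * \sum_(k < n) h x k k + 2%:R * z * X a)
   + (x1 x ^+ 2 * \sum_(k < n) pd a (fun y => pd a (fun y => h y k k) y) x - z * X i0))).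
  apply: eq_bigr => a _.
  rewrite /Hess (sum_GamMl n_gt0 a a x (fun m => pd m (trb h) x)) -/z -/(X i0) -/(X a).
  rewrite (@pd_eq_Hn _ _ n_gt0 _ (fun y => x1 y ^+ 2 * \sum_(k < n) pd a (fun y => h y k k) y
     + (\sum_(k < n) h y k k) * (2%:R * x1 y ^+ 1 * kdelta a i0)) x a (fun y hy => pd_trb a hy) hx).
  by pd_expand; kdelta_cases; ring.
rewrite big_split /= sum_kdelta_r /X !pd_trb //.
do 2 sum_normalize.
by rewrite /z; field.
Qed.

Definition Pop_flat (x : pt) : R :=
  x1 x ^+ 4 * \sum_(i < n) \sum_(j < n) pd i (pd j (fun y => h y i j)) x
  - x1 x ^+ 4 * \sum_(a < n) \sum_(k < n) pd a (fun y => pd a (fun y => h y k k) y) x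
  + (3%:R - n%:R) * x1 x ^+ 3 * (\sum_(k < n) pd k (fun y => h y k i0) x
        + \sum_(k < n) pd k (fun y => h y i0 k) x)
  + (n%:R - 5%:R) * x1 x ^+ 3 * \sum_(k < n) pd i0 (fun y => h y k k) x
  + (2%:R * n%:R - 4%:R) * x1 x ^+ 2 * \sum_(k < n) h x k k
  + (3%:R - n%:R) * (2%:R - n%:R) * x1 x ^+ 2 * h x i0 i0.

Lemma PopE (x : pt) : Hn x -> Pop h x = Pop_flat x.
Proof.
move=> hx; have x0 : x1 x != 0 by rewrite gt_eqF.
rewrite /Pop (sum4_binv x (fun i j a c => D2T h a c i j x)) sum_binv.
rewrite (sum4_binvM x (fun a c => Ric a c x) (fun i j => h x i j)).
rewrite (sum_D2T_diag hx) sum_Hess_trb //.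
have -> : \sum_(i < n) \sum_(j < n) Ric i j x * h x i j =
    (1 - n%:R) * (x1 x ^+ 2)^-1 * \sum_(k < n) h x k k.
  rewrite mulr_sumr; apply: eq_bigr => i _.
  rewrite (eq_bigr (fun j => kdelta i j * ((1 - n%:R) * (x1 x ^+ 2)^-1 * h x i j))).
    exact: sum_kdelta_l.
  by move=> j _; rewrite RicE //; ring.
by rewrite /Pop_flat; field.
Qed.

(* (x^1)^{3-n} with nonnegative exponents, and its first two derivatives in x^1. *)
Definition wt (y : pt) : R := x1 y ^+ 4 * (x1 y ^+ n.+1)^-1.

Definition dwt (y : pt) : R :=
  4%:R * x1 y ^+ 3 * (x1 y ^+ n.+1)^-1 - n.+1%:R * x1 y ^+ 4 * (x1 y ^+ n.+2)^-1.

Definition ddwt (y : pt) : R :=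
  12%:R * x1 y ^+ 2 * (x1 y ^+ n.+1)^-1
  - 8%:R * n.+1%:R * x1 y ^+ 3 * (x1 y ^+ n.+2)^-1
  + n.+1%:R * n.+2%:R * x1 y ^+ 4 * (x1 y ^+ n.+3)^-1.

Lemma raise2_psiE (y : pt) i j : Hn y ->
  raise2 (psi h) y i j =
  x1 y ^+ 4 * (x1 y ^+ n.+1)^-1 * (h y i j - kdelta i j * \sum_(k < n) h y k k).
Proof.
move=> hy; have y0 : x1 y != 0 by rewrite gt_eqF.
rewrite raise2E /psi !mxE trbE /kdelta -[_ *+ (i == j)]mulr_natr.
by field; rewrite expf_neq0.
Qed.

Lemma pd_raise2_psi (y : pt) i j : Hn y ->
  pd j (fun y => raise2 (psi h) y i j) y =
  kdelta j i0 * dwt y * (h y i j - kdelta i j * \sum_(k < n) h y k k)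
  + wt y * (pd j (fun y => h y i j) y - kdelta i j * \sum_(k < n) pd j (fun y => h y k k) y).
Proof.
move=> hy; have y0 : x1 y != 0 by rewrite gt_eqF.
rewrite (@pd_eq_Hn _ _ n_gt0 _ (fun y => x1 y ^+ 4 * (x1 y ^+ n.+1)^-1
   * (h y i j - kdelta i j * \sum_(k < n) h y k k)) y j (fun z hz => raise2_psiE i j hz) hy).
by pd_expand; rewrite /wt /dwt /=; ring.
Qed.

Lemma sum_pd2_raise2_psi (x : pt) : Hn x ->
  \sum_(i < n) \sum_(j < n) pd i (pd j (fun y => raise2 (psi h) y i j)) x =
  wt x * \sum_(i < n) \sum_(j < n) pd i (pd j (fun y => h y i j)) x
  - wt x * \sum_(a < n) \sum_(k < n) pd a (fun y => pd a (fun y => h y k k) y) x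
  + dwt x * (\sum_(k < n) pd k (fun y => h y i0 k) x + \sum_(k < n) pd k (fun y => h y k i0) x
            - 2%:R * \sum_(k < n) pd i0 (fun y => h y k k) x)
  + ddwt x * (h x i0 i0 - \sum_(k < n) h x k k).
Proof.
move=> hx; have x0 : x1 x != 0 by rewrite gt_eqF.
transitivity (\sum_(i < n) \sum_(j < n)
  (kdelta i i0 * (dwt x * (pd j (fun y => h y i j) x
                           - kdelta i j * \sum_(k < n) pd j (fun y => h y k k) x)
                  + kdelta j i0 * ddwt x * (h x i j - kdelta i j * \sum_(k < n) h x k k))
   + kdelta j i0 * (dwt x * (pd i (fun y => h y i j) x
                             - kdelta i j * \sum_(k < n) pd i (fun y => h y k k) x))
   + kdelta i j * (- (wt x * \sum_(k < n) pd i (fun y => pd j (fun y => h y k k) y) x))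
   + wt x * pd i (pd j (fun y => h y i j)) x)).
  apply: eq_bigr => i _; apply: eq_bigr => j _.
  rewrite (@pd_eq_Hn _ _ n_gt0 _ (fun y => kdelta j i0 * (4%:R * x1 y ^+ 3 * (x1 y ^+ n.+1)^-1
        - n.+1%:R * x1 y ^+ 4 * (x1 y ^+ n.+2)^-1) * (h y i j - kdelta i j * \sum_(k < n) h y k k)
     + x1 y ^+ 4 * (x1 y ^+ n.+1)^-1 * (pd j (fun y => h y i j) y
                   - kdelta i j * \sum_(k < n) pd j (fun y => h y k k) y))
     x i (fun y hy => pd_raise2_psi i j hy) hx).
  by pd_expand; rewrite /wt /dwt /ddwt /=; kdelta_cases; ring.
rewrite sum2_kdelta_split sum2_mull.
do 3 sum_normalize.
by rewrite /wt /dwt /ddwt; ring.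
Qed.

Lemma Pop_flat_psi (x : pt) : Hn x ->
  x1 x ^+ n.+1 *
    (\sum_(i < n) \sum_(j < n) pd i (pd j (fun y => raise2 (psi h) y i j)) x
     + \sum_(i < n | nat_of_ord i == 0%N)
         pd i (fun y => (x1 y)^-1 * \sum_(k < n) raise2 (psi h) y k k) x)
  = Pop_flat x.
Proof.
move=> hx; have x0 : x1 x != 0 by rewrite gt_eqF.
have tr_raise2 y : Hn y -> \sum_(k < n) raise2 (psi h) y k k =
    (1 - n%:R) * (x1 y ^+ 4 * (x1 y ^+ n.+1)^-1 * \sum_(k < n) h y k k).
  move=> hy; under eq_bigr do rewrite raise2_psiE // kdelta_refl mul1r.
  by rewrite -mulr_sumr sumrB sumr_const card_ord -mulr_natr; ring.
rewrite sum_pd2_raise2_psi // sum_at_i0.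
rewrite (@pd_eq_Hn _ _ n_gt0 _ (fun y => (x1 y)^-1 * ((1 - n%:R)
    * (x1 y ^+ 4 * (x1 y ^+ n.+1)^-1 * \sum_(k < n) h y k k))) x i0 _ hx); last first.
  by move=> y hy; rewrite tr_raise2.
pd_expand; rewrite /Pop_flat /wt /dwt /ddwt /= !exprS !kdelta_refl.
have xn : x1 x ^+ n != 0 by rewrite expf_neq0.
by field; rewrite xn x0.
Qed.

Lemma h_of_psi (x : pt) : x1 x != 0 -> n != 1%N ->
  h x = x1 x ^+ n.+1 *: (psi h x + ((1 - n%:R)^-1 * trb (psi h) x) *: bmet x).
Proof.
move=> x0 n_neq1.
have xn : x1 x ^+ n.+1 != 0 by rewrite expf_neq0.
have n1 : (1 - n%:R : R) != 0 by rewrite subr_eq0 eq_sym pnatr_eq1.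
have tr_psi : trb (psi h) x =
    x1 x ^+ 2 * ((x1 x ^+ n.+1)^-1 * ((1 - n%:R) * \sum_(k < n) h x k k)).
  rewrite trbE; congr (_ * _).
  rewrite (eq_bigr (fun k => (x1 x ^+ n.+1)^-1 * (h x k k - \sum_(l < n) h x l l))).
    by rewrite -mulr_sumr sumrB sumr_const card_ord -mulr_natr; field.
  by move=> k _; rewrite /psi !mxE eqxx mulr1n trbE; field; rewrite xn x0.
apply/matrixP => i j; rewrite tr_psi /psi !mxE trbE -[_ *+ (i == j)]mulr_natr.
by field; rewrite n1 xn x0.
Qed.

End Perturbation.

Theorem lemma2p2 (R : realType) (n : nat) (hn : (2 <= n)%N)
  (h : 'rV[R]_n -> 'M[R]_n)
  (hsym : forall x, Hn x -> (h x)^T = h x)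
  (hsmooth : forall i j : 'I_n, smooth_on (@Hn R n) (fun x => h x i j)) :
  (forall x, Hn x ->
     h x = (x1 x ^+ n.+1) *:
             (psi h x + ((1 - n%:R)^-1 * trb (psi h) x) *: bmet x)) /\
  (forall x, Hn x ->
     Pop h x = x1 x ^+ n.+1 *
       (\sum_(i < n) \sum_(j < n)
            pd i (pd j (fun y => raise2 (psi h) y i j)) x
        + \sum_(i < n | nat_of_ord i == 0%N)
            pd i (fun y => (x1 y)^-1 * \sum_(k < n) raise2 (psi h) y k k) x)).
Proof.
have n_gt0 : (0 < n)%N := ltnW hn.
split=> x hx; have x0 : x1 x != 0 by rewrite gt_eqF.
  by apply: h_of_psi; rewrite // gtn_eqF.
by rewrite (PopE n_gt0 hsmooth hx) (Pop_flat_psi n_gt0 hsmooth hx).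
Qed.
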